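(* Let $n\ge 1$ be an integer and $R=\mathbb{Z}_2\times\cdots\times\mathbb{Z}_2$ ($n$ factors). Then $\Gamma'(R)$ is perfect; equivalently, neither $\Gamma'(R)$ nor its complement $\overline{\Gamma'(R)}$ contains an induced cycle of odd length at least $5$.
   Context: All rings are commutative with identity. $W^*(R)$ denotes the set of non-zero non-unit elements of $R$. The cozero-divisor graph $\Gamma'(R)$ is the simple graph with vertex set $W^*(R)$, in which distinct $a,b$ are adjacent iff $a\notin Rb$ and $b\notin Ra$. A graph $G$ is perfect if every induced subgraph $H$ satisfies $\omega(H)=\chi(H)$ (clique number equals chromatic number). *)

From HB Require Import structures.
From mathcomp Require Import all_boot all_order all_algebra.
Set Implicit Arguments. Unset Strict Implicit. Unset Printing Implicit Defensive.
Import GRing.Theory.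
Local Open Scope ring_scope.

Section Graphs.
Variables (V : finType) (e : rel V).

Definition is_clique (K : {set V}) : bool :=
  [forall x in K, forall y in K, (x != y) ==> e x y].

Definition clique_num (S : {set V}) : nat :=
  \max_(K : {set V} | (K \subset S) && is_clique K) #|K|.

(* S (induced subgraph) admits a proper colouring with colours in {0,..,k-1}
   (colours are drawn from 'I_#|V|, which suffices since at most #|V| colours
   are ever needed; only the colours on S matter) *)
Definition colorable (S : {set V}) (k : nat) : bool :=
  [exists f : {ffun V -> 'I_#|V|},
     [forall x in S, (f x < k)%N] &&
     [forall x in S, forall y in S, e x y ==> (f x != f y)]].

(* chromatic number of the induced subgraph on S: the least k <= #|V| such
   that S is k-colourable (S is always #|V|-colourable, so this is the
   genuine chromatic number). *)
Definition chrom_num (S : {set V}) : nat :=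
  \big[minn/#|V|]_(k < #|V|.+1 | colorable S k) k.

Definition perfect (W : {set V}) : Prop :=
  forall S : {set V}, S \subset W -> clique_num S = chrom_num S.
End Graphs.

Section Cozero.
Variable R : finPzRingType.

Definition unitb (x : R) : bool := [exists u : R, (u * x == 1) && (x * u == 1)].

Definition Wstar : {set R} := [set x : R | (x != 0) && ~~ unitb x].

Definition in_principal (a b : R) : bool := [exists r : R, a == r * b].

Definition cozero_adj : rel R :=
  fun a b => [&& a != b, ~~ in_principal a b & ~~ in_principal b a].
End Cozero.

(* elements: functions 'I_n -> 'Z_2 with componentwise addition and multiplication *)
Definition Z2pow (n : nat) := {ffun 'I_n -> 'Z_2}.
HB.instance Definition _ n := Finite.on (Z2pow n).
HB.instance Definition _ n := GRing.PzRing.on (Z2pow n).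

From HB Require Import structures.
From mathcomp Require Import all_boot all_order all_algebra.
Set Implicit Arguments. Unset Strict Implicit. Unset Printing Implicit Defensive.
Import GRing.Theory.

(* In Z_2 x ... x Z_2 every element is idempotent, so a \in R b and
   b \in R a force a = a b = b a = b: inclusion of principal ideals is a
   partial order, and Gamma'(R) is its incomparability graph.  Cliques of an
   incomparability graph are antichains and chains can share a colour, so
   perfection is Dilworth's theorem: a finite poset is covered by as many
   chains as its largest antichain has elements. *)

Section MaximalElement.
Variables (T : finType) (le : rel T).
Hypotheses (le_refl : reflexive le) (le_anti : antisymmetric le)
  (le_trans : transitive le).

(* Take M above x with the largest down-set in S: anything strictly above M
   would have a strictly larger one. *)
Lemma exists_maximal_above (S : {set T}) x : x \in S ->
  exists2 M, (M \in S) && le x M & {in S, forall z, le M z -> z = M}.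
Proof.
move=> xS; pose P := [pred y | (y \in S) && le x y].
have Px : P x by rewrite /P /= xS le_refl.
case: (arg_maxnP (fun y => #|[set z in S | le z y]|) Px) => M /andP[MS lxM] Mmax.
exists M; first by rewrite MS lxM.
move=> z zS lMz; apply/eqP; apply: contraT => nzM.
have Pz : P z by rewrite /P /= zS (le_trans lxM lMz).
have := Mmax z Pz; apply: contraLR => _; rewrite /= -ltnNge; apply: proper_card.
apply/properP; split.
  by apply/subsetP => y; rewrite !inE => /andP[-> /le_trans]; apply.
exists z; rewrite !inE zS ?le_refl //=.
by apply: contra nzM => lzM; apply/eqP/le_anti; rewrite lzM lMz.
Qed.

End MaximalElement.

Section FinitePoset.
Variables (T : finType) (le : rel T).
Hypotheses (le_refl : reflexive le) (le_anti : antisymmetric le)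
  (le_trans : transitive le).

Definition comparable_by x y := le x y || le y x.

Definition antichain (A : {set T}) :=
  [forall x in A, forall y in A, (x != y) ==> ~~ comparable_by x y].

Definition chain_coverable (S : {set T}) k := exists f : T -> nat,
  {in S, forall x, f x < k} /\ {in S &, forall x y, f x = f y -> comparable_by x y}.

Lemma comparable_byC x y : comparable_by x y = comparable_by y x.
Proof. by rewrite /comparable_by orbC. Qed.

Lemma antichainP (A : {set T}) :
  reflect {in A &, forall x y, comparable_by x y -> x = y} (antichain A).
Proof.
apply: (iffP forall_inP) => [hA x y xA yA cxy | hA x xA].
  apply/eqP; apply: contraTT cxy => nxy.
  by move/forall_inP: (hA x xA) => /(_ y yA)/implyP; apply.
apply/forall_inP => y yA; apply/implyP; apply: contraL => cxy.
by rewrite (hA x y xA yA cxy) eqxx.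
Qed.

Lemma exists_minimal_below (S : {set T}) x : x \in S ->
  exists2 m, (m \in S) && le m x & {in S, forall z, le z m -> z = m}.
Proof.
apply: (exists_maximal_above (le := fun x y => le y x)) => //.
- by move=> y z /andP[lzy lyz]; apply: le_anti; rewrite lzy lyz.
- by move=> y z w lyz lwy; apply: le_trans lwy lyz.
Qed.

Lemma antichain_meets_colors (A : {set T}) k (f : T -> nat) :
  antichain A -> #|A| = k -> {in A, forall x, f x < k} ->
  {in A &, forall x y, f x = f y -> comparable_by x y} ->
  forall c, c < k -> exists2 a, a \in A & f a = c.
Proof.
move=> /antichainP hA cardA f_lt f_chain c ltck.
have f_uniq : uniq (map f (enum A)).
  rewrite map_inj_in_uniq ?enum_uniq // => x y; rewrite !mem_enum => xA yA fxy.
  exact: hA (f_chain x y xA yA fxy).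
have f_sub : {subset map f (enum A) <= iota 0 k}.
  by move=> y /mapP[x]; rewrite mem_enum => /f_lt ltfk ->; rewrite mem_iota.
have [|_ f_onto] := uniq_min_size f_uniq f_sub.
  by rewrite size_iota size_map -cardE cardA.
have : c \in iota 0 k by rewrite mem_iota.
by rewrite -f_onto => /mapP[a]; rewrite mem_enum => aA ->; exists a.
Qed.

Lemma chain_coverable_setD_chain (S C : {set T}) k :
  {in C &, forall x y, comparable_by x y} ->
  chain_coverable (S :\: C) k -> chain_coverable S k.+1.
Proof.
move=> C_chain [f [f_lt f_chain]].
exists (fun y => if y \in C then k else f y); split => [y yS | y z yS zS].
  by case: ifP => yC //; rewrite ltnS ltnW // f_lt // inE yC.
case: ifP => yC; case: ifP => zC; first by move=> _; apply: C_chain.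
- by have := f_lt z; rewrite inE zC zS => /(_ isT) + kfz; rewrite -kfz ltnn.
- by have := f_lt y; rewrite inE yC yS => /(_ isT) + fyk; rewrite fyk ltnn.
- by apply: f_chain; rewrite inE ?yC ?zC.
Qed.

Definition downset (S A : {set T}) := [set y in S | [exists a in A, le y a]].
Definition upset (S A : {set T}) := [set y in S | [exists a in A, le a y]].

Lemma antichain_downset_le (S A : {set T}) y a : antichain A ->
  y \in downset S A -> a \in A -> comparable_by y a -> le y a.
Proof.
move=> /antichainP hA; rewrite inE => /andP[_ /exists_inP[a' a'A lya']] aA.
case/orP => // lay.
by rewrite (hA a a' aA a'A) // /comparable_by (le_trans lay lya').
Qed.

Lemma antichain_upset_ge (S A : {set T}) y a : antichain A ->
  y \in upset S A -> a \in A -> comparable_by a y -> le a y.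
Proof.
move=> /antichainP hA; rewrite inE => /andP[_ /exists_inP[a' a'A la'y]] aA.
case/orP => // lya.
by rewrite (hA a a' aA a'A) // /comparable_by (le_trans la'y lya) orbT.
Qed.

Lemma downset_sub (S A : {set T}) : downset S A \subset S.
Proof. by apply/subsetP => y; rewrite inE => /andP[]. Qed.

Lemma upset_sub (S A : {set T}) : upset S A \subset S.
Proof. by apply/subsetP => y; rewrite inE => /andP[]. Qed.

Lemma sub_downset (S A : {set T}) : A \subset S -> A \subset downset S A.
Proof.
move=> AS; apply/subsetP => a aA; rewrite inE (subsetP AS) //=.
by apply/exists_inP; exists a.
Qed.

Lemma sub_upset (S A : {set T}) : A \subset S -> A \subset upset S A.
Proof.
move=> AS; apply/subsetP => a aA; rewrite inE (subsetP AS) //=.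
by apply/exists_inP; exists a.
Qed.

Lemma maximum_antichain_cover (S A : {set T}) :
  antichain A -> A \subset S ->
  (forall B : {set T}, B \subset S -> antichain B -> #|B| <= #|A|) ->
  S \subset downset S A :|: upset S A.
Proof.
move=> /antichainP hA AS A_max; apply/subsetP => y yS; rewrite inE.
apply: contraT; rewrite negb_or !inE yS /= => /andP[no_le no_ge].
have yNA : y \notin A.
  by apply: contra no_le => yA; apply/exists_inP; exists y.
have y_incmp a : a \in A -> ~~ comparable_by y a.
  move=> aA; rewrite negb_or; apply/andP; split.
    by apply: contra no_le => lya; apply/exists_inP; exists a.
  by apply: contra no_ge => lay; apply/exists_inP; exists a.
have : #|y |: A| <= #|A|.
  apply: A_max; first by rewrite subUset sub1set yS.
  apply/antichainP => u v; rewrite !inE => /predU1P[->|uA] /predU1P[->|vA] //.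
  - by move=> cyv; have := y_incmp v vA; rewrite cyv.
  - by move=> cuy; have := y_incmp u uA; rewrite comparable_byC cuy.
  - exact: hA.
by rewrite cardsU1 yNA ltnn.
Qed.

(* A k-chain cover of the down-set and one of the up-set of an antichain of
   size k are glued along the antichain: every element of A is the top of
   exactly one chain below and the bottom of exactly one chain above. *)
Lemma chain_coverable_glue (S A : {set T}) k :
  antichain A -> A \subset S -> #|A| = k ->
  S \subset downset S A :|: upset S A ->
  chain_coverable (downset S A) k -> chain_coverable (upset S A) k ->
  chain_coverable S k.
Proof.
set Sm := downset S A; set Sp := upset S A.
move=> hA AS cardA S_cover [fm [fm_lt fm_chain]] [fp [fp_lt fp_chain]].
have ASm : A \subset Sm := sub_downset AS.
have ASp : A \subset Sp := sub_upset AS.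
have upset_of y : y \in S -> y \notin Sm -> y \in Sp.
  by move=> /(subsetP S_cover); rewrite inE => /orP[->|].
pose partner y := odflt y [pick a in A | fp a == fp y].
have partnerP y : y \in Sp -> partner y \in A /\ fp (partner y) = fp y.
  move=> ySp; rewrite /partner; case: pickP => [a /andP[aA /eqP] //|no_a].
  have [||a aA fpa] :=
    antichain_meets_colors (f := fp) hA cardA _ _ (fp_lt y ySp).
  - by move=> a /(subsetP ASp); apply: fp_lt.
  - by move=> a b /(subsetP ASp) aSp /(subsetP ASp); apply: fp_chain.
  by have := no_a a; rewrite aA fpa eqxx.
have partner_le y : y \in Sp -> le (partner y) y.
  move=> ySp; have [pA fpy] := partnerP y ySp.
  apply: (antichain_upset_ge hA ySp pA).
  exact: fp_chain (subsetP ASp _ pA) ySp fpy.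
have mixed y z : y \in Sm -> z \in S -> z \notin Sm ->
    fm y = fm (partner z) -> comparable_by y z.
  move=> ySm zS zSm fmyz; have zSp := upset_of z zS zSm.
  have [pA _] := partnerP z zSp.
  have lyp : le y (partner z).
    apply: (antichain_downset_le hA ySm pA).
    exact: fm_chain ySm (subsetP ASm _ pA) fmyz.
  by rewrite /comparable_by (le_trans lyp (partner_le z zSp)).
exists (fun y => if y \in Sm then fm y else fm (partner y)); split.
  move=> y yS; case: ifP => ySm; first exact: fm_lt.
  have [pA _] := partnerP y (upset_of y yS (negbT ySm)).
  by apply: fm_lt; apply: (subsetP ASm).
move=> y z yS zS; case: ifP => ySm; case: ifP => zSm.
- exact: fm_chain.
- exact: mixed ySm zS (negbT zSm).
- by move=> fmyz; rewrite comparable_byC; apply: mixed zSm yS (negbT ySm) _.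
have [ySp zSp] := (upset_of y yS (negbT ySm), upset_of z zS (negbT zSm)).
have [[pyA fpy] [pzA fpz]] := (partnerP y ySp, partnerP z zSp).
move=> fmyz; apply: fp_chain ySp zSp _; rewrite -fpy -fpz; congr fp.
apply: (antichainP _ hA) => //.
exact: fm_chain _ _ (subsetP ASm _ pyA) (subsetP ASm _ pzA) fmyz.
Qed.

(* Induction on #|S|: either removing the chain [m; M] from a minimal to a
   maximal element lowers the width, or some maximum antichain avoids it, and
   then its down-set and its up-set are both proper subsets of S. *)
Theorem dilworth (S : {set T}) k :
  (forall A : {set T}, A \subset S -> antichain A -> #|A| <= k) ->
  chain_coverable S k.
Proof.
have [N] := ubnP #|S|; elim: N k S => // N IH k S /ltnSE leSN width_S.
have IH_sub (S' : {set T}) : S' \proper S -> chain_coverable S' k.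
  move=> ltS'S; apply: IH; first exact: leq_trans (proper_card ltS'S) leSN.
  by move=> A AS'; apply: width_S; apply: subset_trans AS' (proper_sub ltS'S).
case: (set_0Vmem S) => [-> | [x xS]].
  by exists (fun=> 0); split => y; rewrite inE.
have [m /andP[mS _] m_min] := exists_minimal_below xS.
have [M /andP[MS lemM] M_max] := exists_maximal_above le_refl le_anti le_trans mS.
pose C := [set m; M].
have C_chain : {in C &, forall u v, comparable_by u v}.
  move=> u v; rewrite !inE => /orP[]/eqP-> /orP[]/eqP->;
    by rewrite /comparable_by ?le_refl ?lemM ?orbT.
case: (boolP [exists A : {set T},
              [&& A \subset S :\: C, antichain A & k <= #|A|]]).
  case/exists_inP => A AS'C /andP[hA leAk].
  have AS := subset_trans AS'C (subsetDl S C).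
  have AnC a : a \in A -> a \notin C.
    by move/(subsetP AS'C); rewrite inE => /andP[].
  have cardA : #|A| = k by apply/eqP; rewrite eqn_leq width_S.
  have M_out : M \notin downset S A.
    rewrite inE MS; apply/exists_inP => -[a aA /(M_max a (subsetP AS a aA))] eqaM.
    by have := AnC a aA; rewrite eqaM !inE eqxx orbT.
  have m_out : m \notin upset S A.
    rewrite inE mS; apply/exists_inP => -[a aA /(m_min a (subsetP AS a aA))] eqam.
    by have := AnC a aA; rewrite eqam !inE eqxx.
  apply: (chain_coverable_glue hA AS cardA).
  - by apply: maximum_antichain_cover => // B; rewrite cardA; apply: width_S.
  - by apply: IH_sub; apply/properP; split; [exact: downset_sub | exists M].
  - by apply: IH_sub; apply/properP; split; [exact: upset_sub | exists m].
move=> no_big_antichain.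
have k_gt0 : 0 < k.
  rewrite -(cards1 x) width_S ?sub1set //.
  by apply/antichainP => u v; rewrite !inE => /eqP-> /eqP->.
rewrite -(prednK k_gt0); apply: (chain_coverable_setD_chain C_chain).
apply: IH => [|A AS'C hA].
  apply: leq_trans leSN; apply: proper_card; apply/properP.
  by split; [exact: subsetDl | exists m; rewrite // !inE eqxx].
rewrite -ltnS prednK // ltnNge; apply: contra no_big_antichain => leAk.
by apply/exists_inP; exists A => //; rewrite hA leAk.
Qed.

End FinitePoset.

Lemma bigmin_leq_cond (I : finType) (P : pred I) (F : I -> nat) x0 i :
  P i -> \big[minn/x0]_(j | P j) F j <= F i.
Proof.
move=> Pi; have : i \in index_enum I by rewrite mem_index_enum.
elim: (index_enum I) => // j r IH; rewrite inE big_cons => /predU1P[<-|ir].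
  by rewrite Pi geq_minl.
by case: ifP => _; [apply: leq_trans (geq_minr _ _) _|]; exact: IH.
Qed.

Section GraphColoring.
Variables (V : finType) (e : rel V).

Lemma is_cliqueP (K : {set V}) :
  reflect {in K &, forall x y, x != y -> e x y} (is_clique e K).
Proof.
apply: (iffP forall_inP) => [cK x y xK yK | cK x xK].
  by move/forall_inP: (cK x xK) => /(_ y yK)/implyP.
by apply/forall_inP => y yK; apply/implyP; apply: cK.
Qed.

Lemma clique_num_le_card (S : {set V}) : clique_num e S <= #|V|.
Proof. by apply/bigmax_leqP => K _; apply: max_card. Qed.

Lemma clique_card_le_colors (S K : {set V}) k :
  K \subset S -> is_clique e K -> colorable e S k -> #|K| <= k.
Proof.
move=> KS /is_cliqueP cK /existsP[c /andP[/forall_inP c_lt /forall_inP c_proper]].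
have c_inj : {in K &, injective (fun x => val (c x))}.
  move=> x y xK yK /= cxy; apply/eqP; apply: contraT => nxy.
  have /forall_inP/(_ y (subsetP KS y yK)) := c_proper x (subsetP KS x xK).
  by rewrite cK // (val_inj cxy) eqxx.
rewrite cardE -(size_map (fun x => val (c x))) -(size_iota 0 k).
apply: uniq_leq_size.
  by rewrite map_inj_in_uniq ?enum_uniq // => x y; rewrite !mem_enum; apply: c_inj.
by move=> y /mapP[x]; rewrite mem_enum => /(subsetP KS)/c_lt ltck ->; rewrite mem_iota.
Qed.

Lemma clique_num_le_chrom_num (S : {set V}) : clique_num e S <= chrom_num e S.
Proof.
rewrite /chrom_num; elim/big_ind: _ => [||k colS].
- exact: clique_num_le_card.
- by move=> a b ha hb; rewrite leq_min ha hb.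
- by apply/bigmax_leqP => K /andP[KS cK]; apply: clique_card_le_colors colS.
Qed.

Lemma chrom_num_le_colors (S : {set V}) k :
  k <= #|V| -> colorable e S k -> chrom_num e S <= k.
Proof.
by rewrite -ltnS => ltkV colS; apply: (@bigmin_leq_cond _ _ _ _ (Ordinal ltkV)).
Qed.

End GraphColoring.

Section IncomparabilityGraph.
Variables (V : finType) (le : rel V).
Hypotheses (le_refl : reflexive le) (le_anti : antisymmetric le)
  (le_trans : transitive le).
Variable e : rel V.
Hypothesis eE : forall x y, e x y = (x != y) && ~~ comparable_by le x y.

Lemma clique_antichain (K : {set V}) : is_clique e K = antichain le K.
Proof.
apply: eq_forallb => x; congr (_ ==> _); apply: eq_forallb => y.
by rewrite eE; case: (x != y).
Qed.

Lemma colorable_chain_coverable (S : {set V}) k :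
  k <= #|V| -> chain_coverable le S k -> colorable e S k.
Proof.
move=> lekV [f [f_lt f_chain]].
pose c := [ffun x => insubd (enum_rank x) (f x) : 'I_#|V|].
have cE x : x \in S -> val (c x) = f x.
  by move=> xS; rewrite ffunE val_insubd (leq_trans (f_lt x xS) lekV).
apply/existsP; exists c; apply/andP; split; apply/forall_inP => x xS.
  by rewrite cE // f_lt.
apply/forall_inP => y yS; apply/implyP; rewrite eE => /andP[_].
by apply: contra => /eqP/(congr1 val); rewrite !cE //; apply: f_chain.
Qed.

Theorem incomparability_graph_perfect (W : {set V}) : perfect e W.
Proof.
move=> S _; apply/eqP; rewrite eqn_leq clique_num_le_chrom_num /=.
apply: chrom_num_le_colors (clique_num_le_card _ _) _.
apply: colorable_chain_coverable (clique_num_le_card _ _) _.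
apply: (dilworth le_refl le_anti le_trans) => A AS hA.
by apply: leq_bigmax_cond; rewrite AS clique_antichain.
Qed.

End IncomparabilityGraph.

Section BooleanRing.
Local Open Scope ring_scope.

Lemma idempotent_mulrC (R : pzRingType) :
  (forall x : R, x * x = x) -> commutative (@GRing.mul R).
Proof.
move=> mulxx x y.
have addxx (z : R) : z + z = 0.
  apply: (@addrI _ (z + z)); rewrite addr0 -[RHS](mulxx (z + z)).
  by rewrite mulrDl !mulrDr !mulxx.
have : x * y + y * x = 0.
  apply: (@addrI _ (x + y)); rewrite addr0 -[RHS](mulxx (x + y)).
  rewrite mulrDl !mulrDr !mulxx.
  by rewrite addrACA [y + _]addrC.
by move/eqP; rewrite addr_eq0 => /eqP->; apply/eqP; rewrite eq_sym -addr_eq0 addxx.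
Qed.

Lemma in_principal_refl (R : finPzRingType) : reflexive (@in_principal R).
Proof. by move=> a; apply/existsP; exists 1; rewrite mul1r. Qed.

Lemma in_principal_trans (R : finPzRingType) : transitive (@in_principal R).
Proof.
move=> b a c /existsP[r /eqP->] /existsP[s /eqP->].
by apply/existsP; exists (r * s); rewrite mulrA.
Qed.

Lemma in_principal_anti (R : finPzRingType) :
  (forall x : R, x * x = x) -> antisymmetric (@in_principal R).
Proof.
move=> mulxx a b /andP[/existsP[r /eqP ea] /existsP[s /eqP eb]].
have mul_ab : a * b = a by rewrite ea -mulrA mulxx.
have mul_ba : b * a = b by rewrite eb -mulrA mulxx.
by rewrite -mul_ab idempotent_mulrC // mul_ba.
Qed.

Lemma cozero_adjE (R : finPzRingType) (a b : R) :
  cozero_adj a b = (a != b) && ~~ comparable_by (@in_principal R) a b.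
Proof. by rewrite /cozero_adj /comparable_by negb_or. Qed.

Lemma Z2pow_mulxx n (a : Z2pow n) : a * a = a.
Proof.
apply/ffunP => i; rewrite /GRing.mul /= ffunE.
by case: (a i) => -[|[|//]] ?; apply/val_inj.
Qed.

End BooleanRing.

Theorem theorem3p2 (n : nat) (hn : (1 <= n)%N) :
  perfect (@cozero_adj (Z2pow n)) (Wstar (Z2pow n)).
Proof.
apply: (incomparability_graph_perfect (le := @in_principal (Z2pow n))).
- exact: in_principal_refl.
- exact: in_principal_anti (@Z2pow_mulxx n).
- exact: in_principal_trans.
- exact: cozero_adjE.
Qed.
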